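(* Let $A$ be a combinatorially rich set in $(\mathbb{N},+)$. Then (1) $A$ contains a family of $2^\omega$ almost disjoint subsets each of which is combinatorially rich; and (2) $A$ can be split into $\omega$ pairwise disjoint subsets each of which is combinatorially rich.
   Context: $\mathbb{N}=\{1,2,\dots\}$. For $n\in\mathbb{N}$ and a set $X$, $\mathcal{P}_n(X)$ is the set of $n$-element subsets of $X$, and ${}^mX$ is the set of sequences of length $m$ in $X$. For a commutative semigroup $(S,+)$, $L\in\mathcal{P}_n({}^mS)$, $a\in S$ and nonempty $H\subseteq\{1,\dots,m\}$, put $S_L(a,H)=\{a+\sum_{t\in H}f(t): f\in L\}$. A set $A\subseteq S$ is combinatorially rich if there is a sequence $\langle r_n\rangle_{n=1}^\infty$ in $\mathbb{N}$ such that for each $n\in\mathbb{N}$ and each $L\in\mathcal{P}_n({}^{r_n}S)$ there exist $a\in S$ and nonempty $H\subseteq\{1,\dots,r_n\}$ with $S_L(a,H)\subseteq A$. For an infinite set $X$, a family of almost disjoint subsets of $X$ is a family of subsets of $X$ each of cardinality $|X|$ such that any two distinct members intersect in a set of cardinality less than $|X|$. *)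

(* The semigroup (N,+) with N = {1,2,...} is modelled by the
   positive elements of nat; subsets of N are predicates nat -> Prop that only
   contain positive numbers. *)
From mathcomp Require Import all_boot.
Set Implicit Arguments. Unset Strict Implicit. Unset Printing Implicit Defensive.

Definition inN (x : nat) : Prop := 0 < x.

Definition subsetN (A : nat -> Prop) : Prop := forall x, A x -> inN x.

(* S_L(a,H) = { a + sum_{t in H} f(t) : f in L },  sequences of length m
   are m-tuples, indexed by 'I_m (= {1,...,m} shifted by one). *)
Definition S_L {m : nat} (L : seq (m.-tuple nat)) (a : nat) (H : {set 'I_m})
  (x : nat) : Prop :=
  exists2 f, f \in L & x = a + \sum_(t in H) tnth f t.

Definition in_Pn_seqN (n : nat) {m : nat} (L : seq (m.-tuple nat)) : Prop :=
  uniq L /\ size L = n /\ (forall f, f \in L -> forall t, inN (tnth f t)).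

Definition comb_rich (A : nat -> Prop) : Prop :=
  exists r : nat -> nat,
    (forall n, inN n -> inN (r n)) /\
    forall n, inN n ->
    forall L : seq ((r n).-tuple nat), in_Pn_seqN n L ->
    exists a, exists H : {set 'I_(r n)},
      inN a /\ H != set0 /\ (forall x, S_L L a H x -> A x).

(* finiteness / infiniteness of a subset of nat (for subsets of a countably
   infinite set, cardinality < |X| = omega means finite, and cardinality |X|
   means infinite) *)
Definition finite_nat (B : nat -> Prop) : Prop := exists N, forall x, B x -> x < N.
Definition infinite_nat (B : nat -> Prop) : Prop := ~ finite_nat B.

From mathcomp Require Import all_boot.
From Stdlib Require Import Classical ClassicalEpsilon FunctionalExtensionality.
Set Implicit Arguments. Unset Strict Implicit. Unset Printing Implicit Defensive.

(* Adding K to every term of a configuration L shows that a combinatorially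
   rich set A contains, above any threshold K, a finite set S_L(a,H) for every
   admissible L.  Enumerating the countably many pairs (label, configuration)
   and choosing such finite blocks one after the other, each above all the
   previous ones, gives pairwise disjoint finite blocks inside A; any union
   containing one block for every configuration is again rich.  With labels in
   nat this yields omega disjoint rich subsets of A (the rest of A joins the
   first one).  Labelling the block of the configuration with code k by the
   first k bits of b : nat -> bool yields rich sets F b, and F b, F b' only
   share blocks of the finitely many configurations whose code is at most the
   first index where b and b' differ. *)

Lemma finite_nat_sub (B C : nat -> Prop) :
  (forall x, B x -> C x) -> finite_nat C -> finite_nat B.
Proof. by move=> BC [N ltN]; exists N => x /BC /ltN. Qed.

Lemma finite_nat_bigcup_pickle (T : countType) (P : T -> nat -> Prop) d :
  (forall t, finite_nat (P t)) ->
  finite_nat (fun x => exists2 t, pickle t < d & P t x).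
Proof.
move=> finP; elim: d => [|d [N ltN]]; first by exists 0 => x [].
have new_t t : pickle t = d -> pickle_inv d = Some t.
  by move=> <-; rewrite pickleK_inv.
case Ed: (pickle_inv d) => [t|]; last first.
  exists N => x [t' lt_t' Pt'x]; apply: ltN; exists t' => //.
  by rewrite ltn_neqAle -ltnS lt_t' andbT; apply/eqP => /new_t; rewrite Ed.
have [Nt ltNt] := finP t; exists (maxn N Nt) => x [t' lt_t' Pt'x].
rewrite leq_max; move: lt_t'; rewrite ltnS leq_eqVlt => /orP[/eqP/new_t | lt_d].
  by rewrite Ed => -[eq_t]; rewrite ltNt ?orbT // eq_t.
by rewrite ltN //; exists t'.
Qed.

Lemma disjoint_blocks (T : countType) (good : T -> (nat -> Prop) -> Prop) :
  (forall t K, exists2 S : nat -> Prop,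
     (forall x, S x -> K <= x) /\ finite_nat S & good t S) ->
  exists block : T -> nat -> Prop,
    [/\ forall t, finite_nat (block t),
        forall t t' x, block t x -> block t' x -> t = t'
      & forall t, good t (block t)].
Proof.
move=> blockP.
have [f fP] : exists f : T -> nat -> (nat -> Prop) * nat, forall t K,
    (forall x, (f t K).1 x -> K <= x < (f t K).2) /\ good t (f t K).1.
  have /choice[g gP] : forall tK : T * nat, exists SN : (nat -> Prop) * nat,
      (forall x, SN.1 x -> tK.2 <= x < SN.2) /\ good tK.1 SN.1.
    move=> [t K]; have [S [geK [N ltN]] goodS] := blockP t K.
    by exists (S, N); split=> // x Sx; rewrite geK ?ltN.
  by exists (fun t K => g (t, K)) => t K; apply: gP.
(* [thr k] lies above the blocks of all tasks with code [< k], so the block of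
   the task with code [k] is confined to [thr k, thr k.+1). *)
pose next k K := if pickle_inv k is Some t then maxn K (f t K).2 else K.
pose thr k := iteri k next 0.
have thr_mono : {homo thr : k l / k <= l}.
  apply: homo_leq => [//|k l m|k]; first exact: leq_trans.
  by rewrite /thr /= /next; case: pickle_inv => // t; apply: leq_maxl.
pose block t := (f t (thr (pickle t))).1.
have block_in t x : block t x -> thr (pickle t) <= x < thr (pickle t).+1.
  move=> /(proj1 (fP _ _))/andP[le_x lt_x]; rewrite le_x.
  by rewrite /thr /= /next pickleK_inv (leq_trans lt_x) ?leq_maxr.
exists block; split=> [t | t t' x | t]; last exact: (proj2 (fP _ _)).
  by exists (thr (pickle t).+1) => x /block_in /andP[].
wlog le_tt' : t t' / pickle t <= pickle t'.
  move=> wlog_le bt bt'; case: (leqP (pickle t) (pickle t')) => [le | /ltnW le].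
    exact: wlog_le.
  by apply/esym/wlog_le.
move=> /block_in/andP[_ lt_x] /block_in/andP[le_x _].
apply: (pcan_inj pickleK_inv).
apply/eqP; rewrite eqn_leq le_tt' leqNgt; apply/negP => lt_tt'.
by have := leq_trans lt_x (leq_trans (thr_mono _ _ lt_tt') le_x); rewrite ltnn.
Qed.

Definition blocks_along (X T : Type) (block : X * T -> nat -> Prop)
    (c : T -> X) (x : nat) : Prop :=
  exists t, block (c t, t) x.

Definition prefix_label (T : countType) (b : nat -> bool) (t : T) : seq bool :=
  mkseq b (pickle t).

Lemma exists_bit_diff (b b' : nat -> bool) : b <> b' -> exists d, b d != b' d.
Proof.
move=> neq_bb'; apply: NNPP => no_d; apply/neq_bb'/functional_extensionality => d.
by apply/eqP/negPn/negP => diff_d; apply: no_d; exists d.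
Qed.

Lemma eq_mkseq_le (b b' : nat -> bool) d j :
  b d != b' d -> mkseq b j = mkseq b' j -> j <= d.
Proof.
move=> diff_d eq_j; rewrite leqNgt; apply/negP => lt_dj.
have := congr1 (nth false ^~ d) eq_j; rewrite !nth_mkseq // => eq_d.
by rewrite eq_d eqxx in diff_d.
Qed.

Lemma prefix_blocks_almost_disjoint (T : countType)
    (block : seq bool * T -> nat -> Prop) (b b' : nat -> bool) :
  (forall i, finite_nat (block i)) ->
  (forall i j x, block i x -> block j x -> i = j) -> b <> b' ->
  finite_nat (fun x => blocks_along block (prefix_label b) x /\
                       blocks_along block (prefix_label b') x).
Proof.
move=> fin_block disj_block /exists_bit_diff[d diff_d].
have fin_prefix t := fin_block (prefix_label b t, t).
apply: finite_nat_sub (finite_nat_bigcup_pickle d.+1 fin_prefix).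
move=> x [[t bt] [t' bt']]; exists t => //.
case: (disj_block _ _ _ bt bt') => + eq_t; rewrite -eq_t; exact: eq_mkseq_le.
Qed.

Lemma partition_of_disjoint (A : nat -> Prop) (G : nat -> nat -> Prop) :
  (forall i x, G i x -> A x) -> (forall i j x, G i x -> G j x -> i = j) ->
  exists B : nat -> nat -> Prop,
    [/\ forall x, A x <-> exists i, B i x,
        forall i j x, i <> j -> B i x -> B j x -> False
      & forall i x, G i x -> B i x].
Proof.
move=> GA disjG.
pose B i x := if i is 0 then A x /\ ~ exists j, G j.+1 x else G i x.
exists B; split.
- move=> x; split=> [Ax | [[|i] Bix]]; [| by case: Bix | exact: GA Bix].
  case: (classic (exists j, G j.+1 x)) => [[j Gx] | no_j]; first by exists j.+1.
  by exists 0.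
- move=> [|i] [|j] x neq_ij //=.
  + by move=> [_ no_j] Gx; apply: no_j; exists j.
  + by move=> Gx [_ no_i]; apply: no_i; exists i.
  + by move=> Gix Gjx; apply/neq_ij/(disjG _ _ _ Gix Gjx).
- move=> [|i] x //= G0x.
  by split; [apply: GA G0x | move=> [j /(disjG _ _ _ G0x)]].
Qed.

Lemma comb_rich_sub (B C : nat -> Prop) :
  (forall x, B x -> C x) -> comb_rich B -> comb_rich C.
Proof.
move=> BC [r [r_pos B_r]]; exists r; split=> // n n_pos L L_n.
have [a [H [a_pos [H_n0 SB]]]] := B_r n n_pos L L_n.
by exists a, H; do 2!split=> //; move=> x /SB /BC.
Qed.

Lemma comb_rich_infinite (B : nat -> Prop) : comb_rich B -> infinite_nat B.
Proof.
move=> [r [_ B_r]] [N ltN].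
pose g : (r 1).-tuple nat := [tuple N.+1 | i < r 1].
have g_1 : in_Pn_seqN 1 [:: g].
  by do 2!split=> //; move=> f; rewrite inE => /eqP -> t; rewrite tnth_mktuple.
have [a [H [_ [H_n0 SB]]]] := B_r 1 isT _ g_1.
have /SB/ltN : S_L [:: g] a H (a + #|H| * N.+1).
  exists g; rewrite ?inE //; congr (_ + _); rewrite -sum_nat_const.
  by apply: eq_bigr => t _; rewrite tnth_mktuple.
apply/negP; rewrite -leqNgt (leq_trans _ (leq_addl _ _)) //.
by rewrite (leq_trans (leqnSn N)) // leq_pmull // card_gt0.
Qed.

Definition shift_tuple m K (f : m.-tuple nat) : m.-tuple nat :=
  [tuple tnth f i + K | i < m].

Lemma shift_tuple_inj m K : injective (@shift_tuple m K).
Proof.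
move=> f g /(congr1 (fun h => tnth h _)) eq_fg; apply: eq_from_tnth => i.
by apply/(@addIn K); have := eq_fg i; rewrite !tnth_mktuple.
Qed.

Lemma in_Pn_seqN_shift n m K (L : seq (m.-tuple nat)) :
  in_Pn_seqN n L -> in_Pn_seqN n (map (shift_tuple K) L).
Proof.
move=> [uniqL [sizeL posL]].
rewrite /in_Pn_seqN map_inj_uniq ?size_map; last exact: shift_tuple_inj.
split=> //; split=> // _ /mapP[f Lf ->] t.
by rewrite /inN tnth_mktuple addn_gt0 posL.
Qed.

Lemma S_L_shift m K (L : seq (m.-tuple nat)) a (H : {set 'I_m}) x :
  S_L L (a + #|H| * K) H x -> S_L (map (shift_tuple K) L) a H x.
Proof.
move=> [f Lf ->]; exists (shift_tuple K f); first exact: map_f.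
under [in RHS]eq_bigr => t _ do rewrite tnth_mktuple.
by rewrite big_split sum_nat_const /= addnAC addnA.
Qed.

Lemma S_L_ge m (L : seq (m.-tuple nat)) a (H : {set 'I_m}) x :
  S_L L a H x -> a <= x.
Proof. by move=> [f _ ->]; apply: leq_addr. Qed.

Lemma S_L_finite m (L : seq (m.-tuple nat)) a (H : {set 'I_m}) :
  finite_nat (S_L L a H).
Proof.
exists (\max_(f <- L) (a + \sum_(t in H) tnth f t)).+1 => _ [f Lf ->].
by rewrite ltnS (leq_bigmax_seq f).
Qed.

Definition rich_with (r : nat -> nat) (A : nat -> Prop) : Prop :=
  forall n, inN n -> forall L : seq ((r n).-tuple nat), in_Pn_seqN n L ->
  exists a (H : {set 'I_(r n)}),
    inN a /\ H != set0 /\ (forall x, S_L L a H x -> A x).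

Lemma rich_with_above r A K n (L : seq ((r n).-tuple nat)) :
  rich_with r A -> inN n -> in_Pn_seqN n L ->
  exists a (H : {set 'I_(r n)}),
    [/\ K <= a, inN a, H != set0 & forall x, S_L L a H x -> A x].
Proof.
move=> A_r n_pos L_n.
have [a [H [a_pos [H_n0 SA]]]] := A_r n n_pos _ (in_Pn_seqN_shift K L_n).
have le_K : K <= #|H| * K by rewrite leq_pmull // card_gt0.
exists (a + #|H| * K), H; split=> //; first exact: leq_trans le_K (leq_addl _ _).
  by rewrite /inN addn_gt0 a_pos.
by move=> x /S_L_shift /SA.
Qed.

Section RichBlocks.

Variables (A : nat -> Prop) (r : nat -> nat).
Hypotheses (r_pos : forall n, inN n -> inN (r n)) (A_r : rich_with r A).

Definition rich_task := {n : nat & seq ((r n).-tuple nat)}.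

Definition captures (S : nat -> Prop) (tau : rich_task) : Prop :=
  inN (tag tau) -> in_Pn_seqN (tag tau) (tagged tau) ->
  exists a (H : {set 'I_(r (tag tau))}),
    inN a /\ H != set0 /\ (forall x, S_L (tagged tau) a H x -> S x).

Lemma comb_rich_captures (S : nat -> Prop) :
  (forall tau, captures S tau) -> comb_rich S.
Proof.
by move=> S_all; exists r; split=> // n n_pos L; apply: (S_all (Tagged _ L)).
Qed.

Lemma rich_block_above (tau : rich_task) K : exists2 S : nat -> Prop,
  (forall x, S x -> K <= x) /\ finite_nat S &
  (forall x, S x -> A x) /\ captures S tau.
Proof.
case: tau => n L; case: (classic (inN n /\ in_Pn_seqN n L)) => [[n_pos L_n] | bad].
  have [a [H [le_Ka a_pos H_n0 SA]]] := rich_with_above K A_r n_pos L_n.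
  exists (S_L L a H).
    by split=> [x /S_L_ge | ]; [apply: leq_trans | apply: S_L_finite].
  by split=> // _ _; exists a, H.
exists (fun _ => False); first by split=> //; exists 0.
by split=> // n_pos L_n; case: bad.
Qed.

Lemma rich_blocks (X : countType) : exists block : X * rich_task -> nat -> Prop,
  [/\ forall i x, block i x -> A x,
      forall i, finite_nat (block i),
      forall i j x, block i x -> block j x -> i = j
    & forall c, comb_rich (blocks_along block c)].
Proof.
have [block [fin_block disj_block good_block]] :=
  @disjoint_blocks (X * rich_task)%type
    (fun i S => (forall x, S x -> A x) /\ captures S i.2)
    (fun i K => rich_block_above i.2 K).
exists block; split=> // [i x | c]; first by case: (good_block i) => + _; apply.
apply: comb_rich_captures => tau.
case: (good_block (c tau, tau)) => _ /= cap n_pos L_n.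
have [a [H [a_pos [H_n0 Sblock]]]] := cap n_pos L_n.
by exists a, H; do 2!split=> //; move=> x /Sblock; exists tau.
Qed.

End RichBlocks.

Theorem theorem3p2 (A : nat -> Prop) :
  subsetN A -> comb_rich A ->
  (* (1) a family of 2^omega (indexed injectively by nat -> bool) almost
     disjoint subsets of A, each combinatorially rich *)
  (exists F : (nat -> bool) -> (nat -> Prop),
      (forall b, forall x, F b x -> A x) /\
      (forall b, infinite_nat (F b)) /\
      (forall b b', b <> b' -> finite_nat (fun x => F b x /\ F b' x)) /\
      (forall b, comb_rich (F b))) /\
  (* (2) a splitting of A into omega pairwise disjoint subsets, each
     combinatorially rich *)
  (exists B : nat -> (nat -> Prop),
      (forall x, A x <-> exists i, B i x) /\
      (forall i j x, i <> j -> B i x -> B j x -> False) /\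
      (forall i, comb_rich (B i))).
Proof.
move=> _ [r [r_pos A_r]]; split.
- have [block [blockA fin_block disj_block rich_along]] :=
    rich_blocks r_pos A_r (seq bool).
  exists (fun b => blocks_along block (prefix_label b)).
  split; first by move=> b x [t /blockA].
  split; first by move=> b; apply/comb_rich_infinite/rich_along.
  by split=> [b b' | b]; [apply: prefix_blocks_almost_disjoint | apply: rich_along].
- have [block [blockA _ disj_block rich_along]] := rich_blocks r_pos A_r nat.
  pose G i := blocks_along block (fun _ => i).
  have GA i x : G i x -> A x by move=> [t /blockA].
  have disjG i j x : G i x -> G j x -> i = j.
    by move=> [t /disj_block bt] [t' /bt[]].
  have [B [AB disjB GB]] := partition_of_disjoint GA disjG.
  exists B; do 2!split=> //.
  by move=> i; apply: comb_rich_sub (GB i) (rich_along _).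
Qed.
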